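(* Fix $-1 \leq a < 1$ and let $\mathfrak{g} = \mathfrak{r}_{3,a}$, the three-dimensional Lie algebra with basis $\{e_1,e_2,e_3\}$ and nonzero brackets $[e_1,e_2]=e_2$, $[e_1,e_3]=ae_3$. For every inner product $\langle\cdot,\cdot\rangle$ on $\mathfrak{g}$, there exist $\lambda \in \mathbb{R}$, $k > 0$, and an orthonormal basis $\{x_1, x_2, x_3\}$ with respect to $k \langle\cdot,\cdot\rangle$ such that the bracket relations are given by \[ [x_1 , x_2] = x_2 + \lambda (a-1)x_3 , \quad [x_1 , x_3] = a x_3 \] (and $[x_2,x_3]=0$). Furthermore, the matrix expression of the derivation algebra $\mathrm{Der}(\mathfrak{g})$ with respect to $\{x_1, x_2, x_3\}$ coincides with \[ \left\{ \begin{pmatrix} 0 & 0 & 0 \\ x_{21} & x_{22} & 0 \\ x_{31} & \lambda (x_{33} - x_{22}) & x_{33} \end{pmatrix} \;\middle|\; x_{21}, x_{22}, x_{31}, x_{33} \in \mathbb{R} \right\}. \] *)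

(* g = r_{3,a} realized on row vectors 'rV[R]_3 with
   standard basis e_1,e_2,e_3 = delta_mx 0 0, delta_mx 0 1, delta_mx 0 2. *)
From HB Require Import structures.
From mathcomp Require Import all_boot all_order all_algebra.
Set Implicit Arguments. Unset Strict Implicit. Unset Printing Implicit Defensive.
Import Order.TTheory GRing.Theory Num.Theory.
Local Open Scope ring_scope.

(* bilinear extension of [e1,e2]=e2, [e1,e3]=a e3, [e2,e3]=0 *)
Definition r3a_bracket (R : pzRingType) (a : R) (u v : 'rV[R]_3) : 'rV[R]_3 :=
  (u 0 0 * v 0 1 - u 0 1 * v 0 0) *: (delta_mx 0 1 : 'rV[R]_3)
  + (a * (u 0 0 * v 0 2 - u 0 2 * v 0 0)) *: (delta_mx 0 2 : 'rV[R]_3).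

Definition is_inner_product (R : rcfType) (S : 'M[R]_3) : Prop :=
  S^T = S /\ (forall v : 'rV[R]_3, v != 0 -> 0 < (v *m S *m v^T) 0 0).

Definition ip (R : pzRingType) (S : 'M[R]_3) (u v : 'rV[R]_3) : R :=
  (u *m S *m v^T) 0 0.

Definition is_derivation (R : pzRingType) (a : R) (D : 'M[R]_3) : Prop :=
  forall u v : 'rV[R]_3,
    r3a_bracket a u v *m D = r3a_bracket a (u *m D) v + r3a_bracket a u (v *m D).

(* M is the matrix of D w.r.t. basis x (columns = images): D x_j = sum_i M_ij x_i *)
Definition matrix_wrt (R : pzRingType) (x : 'I_3 -> 'rV[R]_3) (D M : 'M[R]_3) : Prop :=
  forall j : 'I_3, x j *m D = \sum_(i < 3) M i j *: x i.

Definition der_form (R : pzRingType) (lam x21 x22 x31 x33 : R) : 'M[R]_3 :=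
  \matrix_(i < 3, j < 3)
    match nat_of_ord i, nat_of_ord j with
    | 1%N, 0%N => x21
    | 1%N, 1%N => x22
    | 2%N, 0%N => x31
    | 2%N, 1%N => lam * (x33 - x22)
    | 2%N, 2%N => x33
    | _, _ => 0
    end.

From HB Require Import structures.
From mathcomp Require Import all_boot all_order all_algebra.
From mathcomp Require Import ring.
Import Order.TTheory GRing.Theory Num.Theory.
Set Implicit Arguments. Unset Strict Implicit. Unset Printing Implicit Defensive.
Local Open Scope ring_scope.

(* Gram-Schmidt applied to e_3, e_2, e_1 (in this order) gives an orthogonal
   basis that is triangular in the standard basis and whose first vector is
   e_1 modulo [g,g] = <e_2, e_3>; rescaling the last two vectors to the length
   of the first makes it orthonormal for a multiple of the inner product.
   Since ad on [g,g] only sees the e_1-coordinate, for any such triangular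
   basis x_1 = e_1 + .., x_2 = p e_2 + q e_3, x_3 = r e_3 the brackets are the
   stated ones with lam = q / r.  A derivation maps g into [g,g] and, as
   a <> 1, preserves the two distinct eigenlines <e_2>, <e_3> of ad e_1 on
   [g,g]; rewriting such a matrix in the triangular basis gives exactly the
   stated pattern. *)

Lemma sum3 (V : nmodType) (F : 'I_3 -> V) : \sum_(i < 3) F i = F 0 + F 1 + F 2.
Proof. by rewrite !big_ord_recr big_ord0 /= add0r; do 3 f_equal; exact: val_inj. Qed.

Lemma ord3_ind (P : 'I_3 -> Prop) : P 0 -> P 1 -> P 2 -> forall j, P j.
Proof.
move=> P0 P1 P2 [[|[|[|//]]] lt_j3].
- by rewrite (_ : Ordinal _ = 0) //; apply: val_inj.
- by rewrite (_ : Ordinal _ = 1) //; apply: val_inj.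
- by rewrite (_ : Ordinal _ = 2) //; apply: val_inj.
Qed.

Section Bracket.
Variables (R : pzRingType) (a : R).

Lemma r3a_bracket0 u v : r3a_bracket a u v 0 0 = 0.
Proof. by rewrite !mxE /= !mulr0 addr0. Qed.
Lemma r3a_bracket1 u v : r3a_bracket a u v 0 1 = u 0 0 * v 0 1 - u 0 1 * v 0 0.
Proof. by rewrite !mxE /= mulr1 mulr0 addr0. Qed.
Lemma r3a_bracket2 u v : r3a_bracket a u v 0 2 = a * (u 0 0 * v 0 2 - u 0 2 * v 0 0).
Proof. by rewrite !mxE /= mulr1 mulr0 add0r. Qed.
End Bracket.

Lemma mulmx_row3 (R : pzSemiRingType) (u : 'rV[R]_3) (D : 'M[R]_3) k :
  (u *m D) 0 k = u 0 0 * D 0 k + u 0 1 * D 1 k + u 0 2 * D 2 k.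
Proof. by rewrite mxE sum3. Qed.

Lemma is_derivation_r3aP (R : idomainType) (a : R) (D : 'M[R]_3) : a != 1 ->
  is_derivation a D <-> [/\ D 0 0 = 0, D 1 0 = 0, D 2 0 = 0, D 1 2 = 0 & D 2 1 = 0].
Proof.
move=> a_neq1; split=> [derD | [D00 D10 D20 D12 D21] u v].
  have der_entry (i j k : 'I_3) : (r3a_bracket a (delta_mx 0 i) (delta_mx 0 j) *m D) 0 k =
      r3a_bracket a (delta_mx 0 i *m D) (delta_mx 0 j) 0 k
      + r3a_bracket a (delta_mx 0 i) (delta_mx 0 j *m D) 0 k.
    by rewrite derD mxE.
  move: (der_entry 0 1 0) (der_entry 0 1 1) (der_entry 0 1 2) (der_entry 0 2 1)
    (der_entry 1 2 1).
  rewrite !mulmx_row3 !r3a_bracket0 !r3a_bracket1 !r3a_bracket2 !mulmx_row3 !mxE /=.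
  rewrite !(mul0r, mulr0, mul1r, mulr1, oppr0, add0r, addr0, subr0, sub0r).
  move=> hD10 hD00 hD12 hD21 hD20.
  have fixed_eq0 d : a * d = d -> d = 0.
    move/eqP; rewrite -subr_eq0 -{2}[d]mul1r -mulrBl mulf_eq0 subr_eq0.
    by rewrite (negPf a_neq1) => /eqP.
  split; [ | by [] | | exact: fixed_eq0 (esym _) | exact: fixed_eq0].
  - by apply: (addIr (D 1 1)); rewrite add0r -hD00.
  - by rewrite -[D 2 0]opprK -hD20 oppr0.
apply/rowP; apply: ord3_ind;
  rewrite [in RHS]mxE !mulmx_row3 !r3a_bracket0 !r3a_bracket1 !r3a_bracket2.
all: rewrite ?mulmx_row3 ?D00 ?D10 ?D20 ?D12 ?D21; ring.
Qed.

Definition triangular_basis (R : pzRingType) (x : 'I_3 -> 'rV[R]_3) : Prop :=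
  [/\ x 0 0 0 = 1, x 1 0 0 = 0, x 2 0 0 = 0, x 2 0 1 = 0 & x 1 0 1 * x 2 0 2 != 0].

Section TriangularBasis.
Variables (R : fieldType) (a : R) (x : 'I_3 -> 'rV[R]_3).
Hypothesis x_tri : triangular_basis x.

Let lam := x 1 0 2 / x 2 0 2.

Let x000 : x 0 0 0 = 1. Proof. by case: x_tri. Qed.
Let x100 : x 1 0 0 = 0. Proof. by case: x_tri. Qed.
Let x200 : x 2 0 0 = 0. Proof. by case: x_tri. Qed.
Let x201 : x 2 0 1 = 0. Proof. by case: x_tri. Qed.
Let x101_neq0 : x 1 0 1 != 0. Proof. by case: x_tri => _ _ _ _; rewrite mulf_eq0 => /norP[]. Qed.
Let x202_neq0 : x 2 0 2 != 0. Proof. by case: x_tri => _ _ _ _; rewrite mulf_eq0 => /norP[]. Qed.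

Lemma r3a_bracket_x01 : r3a_bracket a (x 0) (x 1) = x 1 + (lam * (a - 1)) *: x 2.
Proof.
apply/rowP; apply: ord3_ind;
  rewrite /= ?r3a_bracket0 ?r3a_bracket1 ?r3a_bracket2 !mxE ?x000 ?x100 ?x200 ?x201 /lam;
  by field.
Qed.

Lemma r3a_bracket_x02 : r3a_bracket a (x 0) (x 2) = a *: x 2.
Proof.
apply/rowP; apply: ord3_ind;
  rewrite /= ?r3a_bracket0 ?r3a_bracket1 ?r3a_bracket2 !mxE ?x000 ?x200 ?x201; ring.
Qed.

Lemma r3a_bracket_x12 : r3a_bracket a (x 1) (x 2) = 0.
Proof.
apply/rowP; apply: ord3_ind;
  rewrite /= ?r3a_bracket0 ?r3a_bracket1 ?r3a_bracket2 !mxE ?x100 ?x200 ?x201; ring.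
Qed.

Lemma matrix_wrt_entries (D M : 'M[R]_3) : matrix_wrt x D M ->
  forall j k, (x j *m D) 0 k = M 0 j * x 0 0 k + M 1 j * x 1 0 k + M 2 j * x 2 0 k.
Proof. by move=> DM j k; rewrite DM summxE sum3 !mxE. Qed.

Lemma matrix_wrt_der_form (D M : 'M[R]_3) :
  [/\ D 0 0 = 0, D 1 0 = 0, D 2 0 = 0, D 1 2 = 0 & D 2 1 = 0] -> matrix_wrt x D M ->
  M = der_form lam (M 1 0) (M 1 1) (M 2 0) (M 2 2).
Proof.
move=> [D00 D10 D20 D12 D21] /matrix_wrt_entries DM.
have M0 j : M 0 j = 0.
  have := DM j 0; rewrite mulmx_row3 D00 D10 D20 x000 x100 x200.
  by rewrite !(mulr0, mulr1, addr0).
have M12 : M 1 2 = 0.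
  apply: (mulIf x101_neq0); rewrite mul0r.
  have := DM 2 1; rewrite mulmx_row3 M0 x200 x201 D21.
  by rewrite !(mul0r, mulr0, add0r, addr0) => <-; ring.
have M22 : M 2 2 = D 2 2.
  apply: (mulIf x202_neq0).
  have := DM 2 2; rewrite mulmx_row3 M0 M12 x200 x201.
  by rewrite !(mul0r, mulr0, add0r, addr0) => <-; ring.
have M21 : M 2 1 * x 2 0 2 = x 1 0 2 * (M 2 2 - M 1 1).
  rewrite M22 mulrBr; have := DM 1 2; rewrite mulmx_row3 M0 x100 D12.
  by rewrite !(mul0r, mulr0, add0r, addr0) => ->; ring.
apply/matrixP; apply: ord3_ind; apply: ord3_ind; rewrite mxE /= ?M0 ?M12 //.
by rewrite /lam mulrAC -M21 mulfK.
Qed.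

Lemma der_form_matrix_wrt (x21 x22 x31 x33 : R) : exists D : 'M[R]_3,
  [/\ D 0 0 = 0, D 1 0 = 0, D 2 0 = 0, D 1 2 = 0 & D 2 1 = 0]
  /\ matrix_wrt x D (der_form lam x21 x22 x31 x33).
Proof.
pose D : 'M[R]_3 := \matrix_(i, j)
  match nat_of_ord i, nat_of_ord j with
  | 0%N, 1%N => x21 * x 1 0 1 - x 0 0 1 * x22
  | 0%N, 2%N => x21 * x 1 0 2 + x31 * x 2 0 2 - x 0 0 2 * x33
  | 1%N, 1%N => x22
  | 2%N, 2%N => x33
  | _, _ => 0
  end.
exists D; split; first by split; rewrite mxE.
apply: ord3_ind; apply/rowP; apply: ord3_ind;
  by rewrite summxE sum3 mulmx_row3 !mxE /= ?x000 ?x100 ?x200 ?x201 /lam; field.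
Qed.

Lemma r3a_derivation_matrix_wrtP : a != 1 -> forall M : 'M[R]_3,
  (exists D, is_derivation a D /\ matrix_wrt x D M) <->
  (exists x21 x22 x31 x33, M = der_form lam x21 x22 x31 x33).
Proof.
move=> a_neq1 M; split.
  move=> [D [/(is_derivation_r3aP D a_neq1) D_zeros DM]].
  by exists (M 1 0), (M 1 1), (M 2 0), (M 2 2); exact: matrix_wrt_der_form D_zeros DM.
move=> [x21 [x22 [x31 [x33 ->]]]].
have [D [D_zeros DM]] := der_form_matrix_wrt x21 x22 x31 x33.
by exists D; split=> //; apply/(is_derivation_r3aP D a_neq1).
Qed.

End TriangularBasis.

Definition ip_reject (R : fieldType) (S : 'M[R]_3) (u v : 'rV[R]_3) : 'rV[R]_3 :=
  u - (ip S u v / ip S v v) *: v.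

Section InnerProduct.
Variables (R : rcfType) (S : 'M[R]_3).
Hypothesis S_ip : is_inner_product S.

Lemma ipBl u v w : ip S (u - v) w = ip S u w - ip S v w.
Proof. by rewrite /ip !mulmxBl !mxE. Qed.

Lemma ipZl c u w : ip S (c *: u) w = c * ip S u w.
Proof. by rewrite /ip -!scalemxAl mxE. Qed.

Lemma ipZr c u w : ip S u (c *: w) = c * ip S u w.
Proof. by rewrite /ip linearZ /= -!scalemxAr mxE. Qed.

Lemma ipC u w : ip S u w = ip S w u.
Proof.
case: S_ip => S_sym _; rewrite /ip.
have -> : (u *m S *m w^T) 0 0 = (u *m S *m w^T)^T 0 0 by rewrite [RHS]mxE.
by rewrite !trmx_mul trmxK S_sym mulmxA.
Qed.

Lemma ip_gt0 u : u != 0 -> 0 < ip S u u.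
Proof. by case: S_ip => _; apply. Qed.

Lemma ip_reject_orthogonal u v : v != 0 -> ip S (ip_reject S u v) v = 0.
Proof.
move=> v_neq0; rewrite /ip_reject ipBl ipZl mulfVK ?subrr //.
exact/lt0r_neq0/ip_gt0.
Qed.

Lemma ip_reject_orthogonal_other u v w :
  ip S u w = 0 -> ip S v w = 0 -> ip S (ip_reject S u v) w = 0.
Proof. by move=> uw vw; rewrite /ip_reject ipBl ipZl uw vw mulr0 subrr. Qed.

Lemma orthogonal_rescale (I : eqType) (w : I -> 'rV[R]_3) (i0 : I) :
  (forall i, w i != 0) -> (forall i j, i != j -> ip S (w i) (w j) = 0) ->
  let c i := Num.sqrt (ip S (w i0) (w i0) / ip S (w i) (w i)) in
  forall i j, (ip S (w i0) (w i0))^-1 * ip S (c i *: w i) (c j *: w j) = (i == j)%:R.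
Proof.
move=> w_neq0 w_orth c i j; rewrite ipZl ipZr.
have [<- | ij] := eqVneq i j; last by rewrite (w_orth i j ij) !mulr0.
have n_neq0 k : ip S (w k) (w k) != 0 by exact/lt0r_neq0/ip_gt0.
have c2 : c i * c i = ip S (w i0) (w i0) / ip S (w i) (w i).
  by rewrite -expr2 sqr_sqrtr // divr_ge0 // ltW // ip_gt0.
by rewrite [c i * _]mulrA c2 divfK // mulr1n mulVf.
Qed.

Lemma exists_triangular_orthonormal_basis : exists (k : R) (x : 'I_3 -> 'rV[R]_3),
  [/\ 0 < k, forall i j, k * ip S (x i) (x j) = (i == j)%:R & triangular_basis x].
Proof.
pose e (i : 'I_3) : 'rV[R]_3 := delta_mx 0 i.
pose w2 := e 2; pose w1 := ip_reject S (e 1) w2.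
pose w0 := ip_reject S (ip_reject S (e 0) w1) w2.
pose w (i : 'I_3) := match nat_of_ord i with 0%N => w0 | 1%N => w1 | _ => w2 end.
have w_diag (i : 'I_3) : w i 0 i = 1.
  by move: i; apply: ord3_ind; rewrite !mxE /= ?(mulr0, subr0).
have w_neq0 i : w i != 0.
  apply/eqP => /(congr1 (fun v : 'rV[R]_3 => v 0 i)).
  by rewrite w_diag mxE; exact/eqP/oner_neq0.
have o12 : ip S w1 w2 = 0 := ip_reject_orthogonal _ (w_neq0 2).
have o02 : ip S w0 w2 = 0 := ip_reject_orthogonal _ (w_neq0 2).
have o01 : ip S w0 w1 = 0.
  apply: ip_reject_orthogonal_other; first exact: ip_reject_orthogonal (w_neq0 1).
  by rewrite ipC.
have w_orth i j : i != j -> ip S (w i) (w j) = 0.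
  by move: i j; do 2!apply: ord3_ind; rewrite ?eqxx //= => _; rewrite ?(ipC w2) ?(ipC w1 w0).
pose c i := Num.sqrt (ip S (w 0) (w 0) / ip S (w i) (w i)).
have c_gt0 i : 0 < c i by rewrite sqrtr_gt0 divr_gt0 ?ip_gt0.
have c0 : c 0 = 1 by rewrite /c divff ?sqrtr1 // lt0r_neq0 ?ip_gt0.
exists (ip S (w 0) (w 0))^-1, (fun i => c i *: w i); split.
- by rewrite invr_gt0 ip_gt0.
- exact: orthogonal_rescale.
- split; rewrite ?mxE /= ?c0 ?mul1r ?(mulr0, subr0) // !mulr1.
  by rewrite mulf_neq0 // lt0r_neq0.
Qed.

End InnerProduct.

Theorem proposition4p8 (R : rcfType) (a : R) (ha1 : -1 <= a) (ha2 : a < 1)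
  (S : 'M[R]_3) (hS : is_inner_product S) :
  exists (lam k : R) (x : 'I_3 -> 'rV[R]_3),
    [/\ 0 < k,
        (forall i j : 'I_3, k * ip S (x i) (x j) = (i == j)%:R),
        [/\ r3a_bracket a (x 0) (x 1) = x 1 + (lam * (a - 1)) *: x 2,
            r3a_bracket a (x 0) (x 2) = a *: x 2
          & r3a_bracket a (x 1) (x 2) = 0]
      & (forall M : 'M[R]_3,
           (exists D : 'M[R]_3, is_derivation a D /\ matrix_wrt x D M) <->
           (exists x21 x22 x31 x33 : R, M = der_form lam x21 x22 x31 x33))].
Proof.
have a_neq1 : a != 1 by rewrite lt_eqF.
have [k [x [k_gt0 x_orthonormal x_tri]]] := exists_triangular_orthonormal_basis hS.
exists (x 1 0 2 / x 2 0 2), k, x; split=> //.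
- split; [exact: r3a_bracket_x01 | exact: r3a_bracket_x02 | exact: r3a_bracket_x12].
- exact: r3a_derivation_matrix_wrtP.
Qed.
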